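(* Let $f:\mathbb{N}\to[0,\infty)$ be weakly super-multiplicative with normal order $g:(0,\infty)\to(0,\infty)$, where $g$ is either non-decreasing or $\log$-uniformly continuous. Then for every $n\in\mathbb{N}$ and every $\epsilon>0$ there exist $\gamma$ with $0<\gamma\le\epsilon$ and $x_0>0$ such that for all real $x>x_0$, \[ g\big(n(1+\gamma)x\big)\;\ge\;(1-5\epsilon)\,f(n)\,g(x). \]
   Context: A function $f:\mathbb{N}\to[0,\infty)$ is weakly super-multiplicative if for all $n\in\mathbb{N}$ and all $\epsilon>0$ there exist $x_0>0$ and $\delta>0$ such that for all real $x>x_0$, $\#\{m\in\mathbb{N}\cap[x,(1+\epsilon)x]: f(nm)\ge(1-\epsilon)f(n)f(m)\}\ge\delta x$. A function $f:\mathbb{N}\to[0,\infty)$ has normal order $g$ if for every $\epsilon>0$ the set $\{n\in\mathbb{N}: |f(n)-g(n)|\ge\epsilon g(n)\}$ has upper (natural) density $0$. A function $g:(0,\infty)\to(0,\infty)$ is $\log$-uniformly continuous if for every $\epsilon>0$ there is $\delta>0$ such that for all $x,y>0$ with $|x/y-1|<\delta$ we have $|g(x)/g(y)-1|<\epsilon$. *)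

From Stdlib Require Import Reals Lra List.
Open Scope R_scope.

(* Convention: N = {1, 2, 3, ...}.  Functions N -> R are modelled as
   nat -> R, only their values at n >= 1 matter. *)

(* #{ m in N /\ [x, (1+eps) x] : P m } >= c :
   there are at least c (as a real) distinct such m. *)
Definition count_ge (lo hi : R) (P : nat -> Prop) (c : R) : Prop :=
  exists l : list nat, NoDup l /\
    (forall m, In m l -> (1 <= m)%nat /\ lo <= INR m <= hi /\ P m) /\
    c <= INR (length l).

Definition weakly_super_multiplicative (f : nat -> R) : Prop :=
  forall (n : nat) (eps : R), (1 <= n)%nat -> 0 < eps ->
    exists x0 delta : R, 0 < x0 /\ 0 < delta /\
      forall x : R, x > x0 ->
        count_ge x ((1 + eps) * x)
          (fun m => f (n * m)%nat >= (1 - eps) * f n * f m) (delta * x).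

(* #{ n in N, n <= N : P n } <= c : every finite duplicate-free list of
   such n has length at most c. *)
Definition count_le (N : nat) (P : nat -> Prop) (c : R) : Prop :=
  forall l : list nat, NoDup l ->
    (forall m, In m l -> (1 <= m <= N)%nat /\ P m) ->
    INR (length l) <= c.

Definition upper_density_zero (P : nat -> Prop) : Prop :=
  forall d : R, 0 < d -> exists N0 : nat, forall N : nat, (N0 <= N)%nat ->
    count_le N P (d * INR N).

Definition normal_order (f : nat -> R) (g : R -> R) : Prop :=
  forall eps : R, 0 < eps ->
    upper_density_zero (fun n => Rabs (f n - g (INR n)) >= eps * g (INR n)).

Definition nondecreasing_pos (g : R -> R) : Prop :=
  forall x y : R, 0 < x -> x <= y -> g x <= g y.

Definition log_uniformly_continuous (g : R -> R) : Prop :=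
  forall eps : R, 0 < eps -> exists delta : R, 0 < delta /\
    forall x y : R, 0 < x -> 0 < y -> Rabs (x / y - 1) < delta ->
      Rabs (g x / g y - 1) < eps.

(* Choose [gamma <= eps] so small that [g] drops by at most a factor [1 - eps]
   between [v] and [(1 + gamma) v]; this uses monotonicity or log-uniform
   continuity.  Weak super-multiplicativity gives [>= delta x] integers [m] in
   [[x, (1 + gamma) x]] with [f (n m) >= (1 - gamma) f n f m], whereas the
   integers [m] for which [m] or [n m] violate the normal order are [o(x)] in
   number there.  For a remaining [m], chaining
   [g (n (1 + gamma) x) ~ g (n m) ~ f (n m) >= f n f m ~ f n g m ~ f n g x]
   loses five factors of about [1 - eps]. *)
From Stdlib Require Import Reals.
From Stdlib Require Import Lra Lia List ZArith Classical FinFun.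
Open Scope R_scope.

Lemma NoDup_split_or (P Q : nat -> Prop) (l : list nat) :
  NoDup l -> (forall m, In m l -> P m \/ Q m) ->
  exists l1 l2, NoDup l1 /\ NoDup l2 /\
    (forall m, In m l1 -> In m l /\ P m) /\
    (forall m, In m l2 -> In m l /\ Q m) /\
    (length l <= length l1 + length l2)%nat.
Proof.
  induction l as [|a l IH]; intros Hnd HPQ.
  - exists nil, nil; simpl; repeat split; try apply NoDup_nil; try (intros m []); lia.
  - apply NoDup_cons_iff in Hnd as [Ha Hnd].
    destruct IH as [l1 [l2 [Hnd1 [Hnd2 [H1 [H2 Hlen]]]]]]; auto.
    { intros m Hm; apply HPQ; right; auto. }
    destruct (HPQ a (or_introl eq_refl)) as [Pa|Qa].
    + exists (a :: l1), l2. split; [|split; [|split; [|split]]].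
      * constructor; auto. intro Hin; apply Ha, H1; auto.
      * auto.
      * intros m [<-|Hm]; [split; [left|]; auto|].
        destruct (H1 m Hm); split; [right|]; auto.
      * intros m Hm; destruct (H2 m Hm); split; [right|]; auto.
      * simpl; lia.
    + exists l1, (a :: l2). split; [|split; [|split; [|split]]].
      * auto.
      * constructor; auto. intro Hin; apply Ha, H2; auto.
      * intros m Hm; destruct (H1 m Hm); split; [right|]; auto.
      * intros m [<-|Hm]; [split; [left|]; auto|].
        destruct (H2 m Hm); split; [right|]; auto.
      * simpl; lia.
Qed.

Lemma exists_nat_between (r : R) : 0 < r -> exists N : nat, r <= INR N <= r + 1.
Proof.
  intros Hr. destruct (archimed r) as [H1 H2].
  assert (Hp : (0 < up r)%Z) by (apply lt_0_IZR; lra).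
  exists (Z.to_nat (up r)). rewrite INR_IZR_INZ, Z2Nat.id by lia. lra.
Qed.

Lemma nearly_nondecreasing_on_short_ratios (g : R -> R) (eps : R) :
  (forall x, 0 < x -> 0 < g x) ->
  nondecreasing_pos g \/ log_uniformly_continuous g -> 0 < eps ->
  exists gamma, 0 < gamma /\ gamma <= eps /\
    forall u v, 0 < v -> v <= u -> u <= (1 + gamma) * v -> g u >= (1 - eps) * g v.
Proof.
  intros hg_pos [Hmono|Hluc] Heps.
  - exists eps. split; [lra|split; [lra|]]. intros u v Hv Hvu _.
    pose proof (Hmono v u Hv Hvu). pose proof (hg_pos v Hv). nra.
  - destruct (Hluc eps Heps) as [dl [Hdl Hclose]]. exists (Rmin eps (dl / 2)).
    split; [apply Rmin_pos; lra|split; [apply Rmin_l|]].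
    intros u v Hv Hvu Hu. pose proof (Rmin_r eps (dl / 2)).
    assert (Hratio : u = (u / v) * v) by (field; lra).
    assert (Habs : Rabs (u / v - 1) < dl) by (apply Rabs_def1; nra).
    destruct (Rabs_def2 _ _ (Hclose u v ltac:(lra) Hv Habs)) as [_ Hlow].
    pose proof (hg_pos v Hv).
    assert (Hgratio : g u = (g u / g v) * g v) by (field; lra).
    nra.
Qed.

(* Exceptional [m] lie below [N ~ c x] and exceptional multiples [n m] below
   [n N], so density zero at scale [d] bounds them by [d (1 + n) (c + 1) x],
   which is [delta x / 2] for the [d] chosen. *)
Lemma dense_list_avoids_density_zero (E : nat -> Prop) (n : nat) (c delta : R) :
  upper_density_zero E -> (1 <= n)%nat -> 1 <= c -> 0 < delta ->
  exists X, 0 < X /\ forall (x : R) (l : list nat), X < x -> NoDup l ->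
    (forall m, In m l -> (1 <= m)%nat /\ x <= INR m <= c * x) ->
    delta * x <= INR (length l) ->
    exists m, In m l /\ ~ E m /\ ~ E (n * m)%nat.
Proof.
  intros hE Hn Hc Hdelta.
  assert (Hnp : 0 < INR n) by (apply lt_0_INR; lia).
  set (d := delta / (2 * (1 + INR n) * (c + 1))).
  assert (Hd : 0 < d) by (unfold d; apply Rdiv_lt_0_compat; [lra|]; nra).
  destruct (hE d Hd) as [N0 HN0].
  exists (Rmax 1 (INR N0)). split; [pose proof (Rmax_l 1 (INR N0)); lra|].
  intros x l Hx Hnd Hl Hlen.
  pose proof (Rmax_l 1 (INR N0)); pose proof (Rmax_r 1 (INR N0)).
  apply NNPP; intro Hnone.
  assert (Hor : forall m, In m l -> E m \/ E (n * m)%nat).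
  { intros m Hm. destruct (classic (E m)); [left; auto|right].
    apply NNPP; intro; apply Hnone; exists m; auto. }
  destruct (NoDup_split_or E (fun m => E (n * m)%nat) l Hnd Hor)
    as [l1 [l2 [Hnd1 [Hnd2 [H1 [H2 Hsplit]]]]]].
  destruct (exists_nat_between (c * x)) as [N HN]; [nra|].
  assert (HN0N : (N0 <= N)%nat) by (apply INR_le; nra).
  assert (Hcount1 : INR (length l1) <= d * INR N).
  { apply (HN0 N HN0N l1 Hnd1). intros m Hm. destruct (H1 m Hm) as [Hml HE].
    destruct (Hl m Hml) as [Hm1 Hmx]. repeat split; auto. apply INR_le; lra. }
  assert (Hcount2 : INR (length (map (Nat.mul n) l2)) <= d * INR (n * N)).
  { apply (HN0 (n * N)%nat); [nia| |].
    - apply Injective_map_NoDup_in; auto. intros a b _ _ Hab. nia.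
    - intros k Hk. apply in_map_iff in Hk as [m [<- Hm]].
      destruct (H2 m Hm) as [Hml HE]. destruct (Hl m Hml) as [Hm1 Hmx].
      assert (m <= N)%nat by (apply INR_le; lra). split; auto. nia. }
  rewrite length_map, mult_INR in Hcount2.
  apply le_INR in Hsplit. rewrite plus_INR in Hsplit.
  assert (Hd_def : d * (1 + INR n) * (c + 1) = delta / 2) by (unfold d; field; lra).
  assert (d * (1 + INR n) * INR N <= d * (1 + INR n) * ((c + 1) * x))
    by (apply Rmult_le_compat_l; nra).
  nra.
Qed.

(* Here [A, B, C, D] stand for [g (n (1 + gamma) x), g (n m), g m, g x] and
   [F, fm, fnm] for [f n, f m, f (n m)]; the bound is trivial once [5 eps >= 1]. *)
Lemma transfer_lower_bound (eps gamma F fm fnm A B C D : R) :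
  0 < eps -> 0 < gamma <= eps -> 0 <= F ->
  0 < A -> 0 < B -> 0 < C -> 0 < D ->
  Rabs (fm - C) < eps * C -> Rabs (fnm - B) < eps * B ->
  fnm >= (1 - gamma) * F * fm -> A >= (1 - eps) * B -> C >= (1 - eps) * D ->
  A >= (1 - 5 * eps) * F * D.
Proof.
  intros Heps [Hg0 Hge] HF HA HB HC HD Hfm Hfnm Hsuper HAB HCD.
  assert (HFD : 0 <= F * D) by (apply Rmult_le_pos; lra).
  destruct (Rle_lt_dec 1 (5 * eps)) as [Hbig|Hsmall]; [nra|].
  apply Rabs_def2 in Hfm as [_ Hfm]. apply Rabs_def2 in Hfnm as [Hfnm _].
  assert (HfmD : fm >= (1 - eps) ^ 2 * D) by nra.
  assert (HfnmFD : fnm >= (1 - eps) ^ 3 * (F * D)).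
  { assert (0 <= (1 - gamma) * F) by (apply Rmult_le_pos; lra).
    assert ((1 - gamma) * F * fm >= (1 - gamma) * F * ((1 - eps) ^ 2 * D)) by nra.
    assert (0 <= (1 - eps) ^ 2 * (F * D)) by (apply Rmult_le_pos; [apply pow2_ge_0|lra]).
    replace ((1 - gamma) * F * ((1 - eps) ^ 2 * D))
      with ((1 - gamma) * ((1 - eps) ^ 2 * (F * D))) in * by ring.
    replace ((1 - eps) ^ 3 * (F * D)) with ((1 - eps) * ((1 - eps) ^ 2 * (F * D))) by ring.
    nra. }
  assert (HAFD : (1 + eps) * A >= (1 - eps) ^ 4 * (F * D)) by nra.
  assert (Hpoly : (1 - eps) ^ 4 >= (1 - 5 * eps) * (1 + eps)) by nra.
  nra.
Qed.

Theorem mainTheorem2 (f : nat -> R) (g : R -> R)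
  (hf_nonneg : forall n : nat, (1 <= n)%nat -> 0 <= f n)
  (hg_pos : forall x : R, 0 < x -> 0 < g x)
  (hf_wsm : weakly_super_multiplicative f)
  (hfg : normal_order f g)
  (hg : nondecreasing_pos g \/ log_uniformly_continuous g) :
  forall (n : nat) (eps : R), (1 <= n)%nat -> 0 < eps ->
    exists gamma x0 : R, 0 < gamma /\ gamma <= eps /\ 0 < x0 /\
      forall x : R, x > x0 ->
        g (INR n * (1 + gamma) * x) >= (1 - 5 * eps) * f n * g x.
Proof.
  intros n eps Hn Heps.
  assert (Hnp : 0 < INR n) by (apply lt_0_INR; lia).
  destruct (nearly_nondecreasing_on_short_ratios g eps hg_pos hg Heps)
    as [gamma [Hg0 [Hge Hnear]]].
  destruct (hf_wsm n gamma Hn Hg0) as [x0 [delta [Hx0 [Hdelta Hwsm]]]].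
  destruct (dense_list_avoids_density_zero _ n (1 + gamma) delta (hfg eps Heps)
              Hn ltac:(lra) Hdelta) as [X [HX Havoid]].
  exists gamma, (Rmax x0 X). split; [lra|split; [lra|split]].
  { pose proof (Rmax_l x0 X); lra. }
  intros x Hx. pose proof (Rmax_l x0 X); pose proof (Rmax_r x0 X).
  destruct (Hwsm x ltac:(lra)) as [l [Hnd [Hl Hlen]]].
  destruct (Havoid x l ltac:(lra) Hnd ltac:(intros m Hm; apply Hl in Hm; tauto) Hlen)
    as [m [Hm [Hgood_m Hgood_nm]]].
  destruct (Hl m Hm) as [Hm1 [Hmx Hsuper]].
  apply Rnot_ge_lt in Hgood_m, Hgood_nm. rewrite mult_INR in Hgood_nm.
  assert (Hmp : 0 < INR m) by lra.
  apply (transfer_lower_bound eps gamma (f n) (f m) (f (n * m)%nat)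
           _ (g (INR n * INR m)) (g (INR m))); auto; try (apply hg_pos; nra).
  - assert (INR n * INR m <= INR n * ((1 + gamma) * x)) by (apply Rmult_le_compat_l; lra).
    assert (INR n * x <= INR n * INR m) by (apply Rmult_le_compat_l; lra).
    apply Hnear; nra.
  - apply Hnear; lra.
Qed.
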